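(* Let $P_1$ be the uniform distribution on $J_1=[0,\frac12]$, let $P_2$ be the uniform distribution on $J_2=[\frac34,1]$, and let $P=\frac34P_1+\frac14P_2$. For $n\ge 2$, let $\alpha_n$ be an optimal set of $n$-means for $P$. Then $\alpha_n\cap J_1\neq\emptyset$ and $\alpha_n\cap J_2\neq\emptyset$. Moreover, for $n\ge 2$, the Voronoi region (with respect to $\alpha_n$) of any point in $\alpha_n\cap J_1$ does not contain any point of $J_2$, and the Voronoi region of any point in $\alpha_n\cap J_2$ does not contain any point of $J_1$.
   Context: For a finite set $\alpha\subset\mathbb R$, $V(P;\alpha)=\int\min_{a\in\alpha}(x-a)^2\,dP(x)$; $V_n=\inf\{V(P;\alpha):\mathrm{card}(\alpha)\le n\}$; an optimal set of $n$-means is a set $\alpha$ with $\mathrm{card}(\alpha)\le n$ and $V(P;\alpha)=V_n$. The Voronoi region of $a\in\alpha$ is $\{x\in\mathbb R: |x-a|=\min_{b\in\alpha}|x-b|\}$. *)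

From Stdlib Require Import Reals Lra List.
From Coquelicot Require Import Coquelicot.
Open Scope R_scope.

Fixpoint mindist (a0 : R) (l : list R) (x : R) : R :=
  match l with
  | nil => (x - a0) ^ 2
  | b :: l' => Rmin ((x - a0) ^ 2) (mindist b l' x)
  end.

Definition sqdist (alpha : list R) (x : R) : R :=
  match alpha with
  | nil => 0 (* unused: the empty set is excluded *)
  | a :: l => mindist a l x
  end.

Definition unif_int (a b : R) (f : R -> R) : R := / (b - a) * RInt f a b.

Definition P_int (f : R -> R) : R :=
  3/4 * unif_int 0 (1/2) f + 1/4 * unif_int (3/4) 1 f.

Definition distortion (alpha : list R) : R := P_int (sqdist alpha).

(* admissible sets of at most n points (nonempty); card alpha <= length alpha *)
Definition admissible (n : nat) (alpha : list R) : Prop :=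
  alpha <> nil /\ (length alpha <= n)%nat.

Definition Vn (n : nat) : Rbar :=
  Glb_Rbar (fun v => exists alpha, admissible n alpha /\ v = distortion alpha).

Definition optimal_n_means (n : nat) (alpha : list R) : Prop :=
  admissible n alpha /\ NoDup alpha /\ Finite (distortion alpha) = Vn n.

Definition voronoi (alpha : list R) (a x : R) : Prop :=
  forall b, In b alpha -> Rabs (x - a) <= Rabs (x - b).

Definition J1 (x : R) : Prop := 0 <= x <= 1/2.
Definition J2 (x : R) : Prop := 3/4 <= x <= 1.

(* The distortion of an optimal set is at most that of an explicit candidate: {1/4, 7/8},
   of cost 13/768, when n = 2, and {1/8, 3/8, 7/8}, of cost 1/192, when n >= 3.  For n = 2,
   locating the boundary between the two points shows that {1/4, 7/8} is the only two-point
   set of cost at most 13/768.  For n >= 3, each failure of the conclusion either leaves a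
   quarter-length piece of the support far from every point, costing more than 1/192, or makes
   1 (or a point beyond it) the only point serving J2, and moving that point to 7/8 would
   strictly lower the distortion. *)

From Stdlib Require Import Reals Lra Psatz List Lia Classical.
From Coquelicot Require Import Coquelicot.
Open Scope R_scope.

Definition second_moment (a b c : R) : R := ((b - c) ^ 3 - (a - c) ^ 3) / 3.

Lemma RInt_sqr_shift (a b c : R) :
  RInt (fun y => (y - c) ^ 2) a b = second_moment a b c.
Proof.
  apply is_RInt_unique.
  replace (second_moment a b c) with
    (minus ((fun y => (y - c) ^ 3 / 3) b) ((fun y => (y - c) ^ 3 / 3) a))
    by (unfold second_moment, minus, plus, opp; simpl; field).
  apply (is_RInt_derive (fun y => (y - c) ^ 3 / 3) (fun y => (y - c) ^ 2)).
  - intros x _. auto_derive; [easy|]. unfold one, mult, zero, plus; simpl. field.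
  - intros x _. apply (ex_derive_continuous (fun y => (y - c) ^ 2)). auto_derive. easy.
Qed.

Lemma continuous_sqr_shift (c x : R) : continuous (fun y => (y - c) ^ 2) x.
Proof. apply (ex_derive_continuous (fun y => (y - c) ^ 2)). auto_derive. easy. Qed.

Lemma continuous_Rmin (f g : R -> R) (x : R) :
  continuous f x -> continuous g x -> continuous (fun y => Rmin (f y) (g y)) x.
Proof.
  intros Hf Hg.
  assert (Rmin_abs : forall u v, Rmin u v = (u + v - Rabs (u - v)) / 2).
  { intros u v. unfold Rmin. destruct (Rle_dec u v).
    - rewrite Rabs_left1; lra.
    - rewrite Rabs_right; lra. }
  apply continuous_ext with (f := fun y => (f y + g y - Rabs (f y - g y)) / 2).
  { intros y. now rewrite Rmin_abs. }
  apply (continuous_mult (fun y => f y + g y - Rabs (f y - g y)) (fun _ => / 2));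
    [|apply continuous_const].
  apply (continuous_minus (fun y => f y + g y) (fun y => Rabs (f y - g y))).
  - now apply (continuous_plus f g).
  - apply continuous_Rabs_comp. now apply (continuous_minus f g).
Qed.

Lemma continuous_mindist (l : list R) : forall a0 x, continuous (mindist a0 l) x.
Proof.
  induction l as [|b l IH]; intros a0 x; simpl.
  - apply continuous_sqr_shift.
  - apply continuous_Rmin; [apply continuous_sqr_shift | apply IH].
Qed.

Lemma mindist_le (l : list R) : forall a0 b y, In b (a0 :: l) -> mindist a0 l y <= (y - b) ^ 2.
Proof.
  induction l as [|c l IH]; intros a0 b y Hb; simpl in *.
  - destruct Hb as [<-|[]]. lra.
  - destruct Hb as [<-|Hb].
    + apply Rmin_l.
    + eapply Rle_trans; [apply Rmin_r|]. now apply IH.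
Qed.

Lemma mindist_attained (l : list R) :
  forall a0 y, exists b, In b (a0 :: l) /\ mindist a0 l y = (y - b) ^ 2.
Proof.
  induction l as [|c l IH]; intros a0 y; simpl.
  - exists a0. auto.
  - destruct (IH c y) as [b [Hb Heq]].
    unfold Rmin. destruct (Rle_dec _ _).
    + exists a0. auto.
    + exists b. auto.
Qed.

Lemma continuous_sqdist (alpha : list R) (x : R) : continuous (sqdist alpha) x.
Proof.
  destruct alpha as [|a l]; [apply continuous_const | apply continuous_mindist].
Qed.

Lemma sqdist_le (alpha : list R) (b y : R) : In b alpha -> sqdist alpha y <= (y - b) ^ 2.
Proof. destruct alpha as [|a l]; [intros []| apply mindist_le]. Qed.

Lemma sqdist_attained (alpha : list R) (y : R) :
  alpha <> nil -> exists b, In b alpha /\ sqdist alpha y = (y - b) ^ 2.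
Proof. destruct alpha as [|a l]; [easy|]. intros _. apply mindist_attained. Qed.

Lemma sqdist_nonneg (alpha : list R) (y : R) : 0 <= sqdist alpha y.
Proof.
  destruct alpha as [|a l]; [apply Rle_refl|].
  destruct (sqdist_attained (a :: l) y ltac:(discriminate)) as [b [_ ->]].
  apply pow2_ge_0.
Qed.

Lemma ex_RInt_sqdist (alpha : list R) (a b : R) : ex_RInt (sqdist alpha) a b.
Proof. apply (@ex_RInt_continuous R_CompleteNormedModule). intros; apply continuous_sqdist. Qed.

Lemma ex_RInt_sqr_shift (a b c : R) : ex_RInt (fun y => (y - c) ^ 2) a b.
Proof. apply (@ex_RInt_continuous R_CompleteNormedModule). intros; apply continuous_sqr_shift. Qed.

Lemma RInt_sqdist_Chasles (alpha : list R) (a b c : R) :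
  RInt (sqdist alpha) a c = RInt (sqdist alpha) a b + RInt (sqdist alpha) b c.
Proof. symmetry. apply (RInt_Chasles (sqdist alpha)); apply ex_RInt_sqdist. Qed.

Lemma RInt_sqdist_nonneg (alpha : list R) (a b : R) : a <= b -> 0 <= RInt (sqdist alpha) a b.
Proof.
  intros Hab. apply RInt_ge_0; [exact Hab | apply ex_RInt_sqdist |].
  intros; apply sqdist_nonneg.
Qed.

Lemma RInt_sqdist_mono (alpha beta : list R) (a b : R) : a <= b ->
  (forall y, a < y < b -> sqdist beta y <= sqdist alpha y) ->
  RInt (sqdist beta) a b <= RInt (sqdist alpha) a b.
Proof. intros Hab H. apply RInt_le; auto; apply ex_RInt_sqdist. Qed.

Lemma RInt_sqdist_le (alpha : list R) (a b c : R) : In c alpha -> a <= b ->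
  RInt (sqdist alpha) a b <= second_moment a b c.
Proof.
  intros Hc Hab. rewrite <- RInt_sqr_shift.
  apply RInt_le; [exact Hab | apply ex_RInt_sqdist | apply ex_RInt_sqr_shift |].
  intros y _. now apply sqdist_le.
Qed.

Lemma RInt_sqdist_ge (alpha : list R) (a b c : R) : alpha <> nil -> a <= b ->
  (forall y d, a < y < b -> In d alpha -> (y - c) ^ 2 <= (y - d) ^ 2) ->
  second_moment a b c <= RInt (sqdist alpha) a b.
Proof.
  intros Hnil Hab H. rewrite <- RInt_sqr_shift.
  apply RInt_le; [exact Hab | apply ex_RInt_sqr_shift | apply ex_RInt_sqdist |].
  intros y Hy. destruct (sqdist_attained alpha y Hnil) as [d [Hd ->]]. auto.
Qed.

Lemma RInt_sqdist_gt (alpha : list R) (a b c : R) : alpha <> nil -> a < b ->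
  (forall y d, a < y < b -> In d alpha -> (y - c) ^ 2 < (y - d) ^ 2) ->
  second_moment a b c < RInt (sqdist alpha) a b.
Proof.
  intros Hnil Hab H. rewrite <- RInt_sqr_shift.
  apply RInt_lt; [exact Hab | intros; apply continuous_sqdist |
                  intros; apply continuous_sqr_shift |].
  intros y Hy. destruct (sqdist_attained alpha y Hnil) as [d [Hd ->]]. auto.
Qed.

Lemma distortion_eq (alpha : list R) :
  distortion alpha = 3 / 2 * RInt (sqdist alpha) 0 (1 / 2) + RInt (sqdist alpha) (3 / 4) 1.
Proof. unfold distortion, P_int, unif_int. field. Qed.

Lemma optimal_nonnil (n : nat) (alpha : list R) : optimal_n_means n alpha -> alpha <> nil.
Proof. now intros [[Hnil _] _]. Qed.

Lemma optimal_distortion_le (n : nat) (alpha beta : list R) :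
  optimal_n_means n alpha -> admissible n beta -> distortion alpha <= distortion beta.
Proof.
  intros [_ [_ HV]] Hbeta.
  destruct (Glb_Rbar_correct (fun v => exists alpha, admissible n alpha /\ v = distortion alpha))
    as [Hlb _].
  specialize (Hlb (distortion beta) (ex_intro _ beta (conj Hbeta eq_refl))).
  unfold Vn in HV. now rewrite <- HV in Hlb.
Qed.

Lemma optimal_distortion_le_13_768 (n : nat) (alpha : list R) :
  (2 <= n)%nat -> optimal_n_means n alpha -> distortion alpha <= 13 / 768.
Proof.
  intros Hn Hopt.
  set (beta := 1 / 4 :: 7 / 8 :: nil).
  eapply Rle_trans.
  { apply (optimal_distortion_le n alpha beta Hopt). split; [discriminate | simpl; lia]. }
  rewrite distortion_eq.
  assert (H1 := RInt_sqdist_le beta 0 (1 / 2) (1 / 4) ltac:(simpl; auto) ltac:(lra)).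
  assert (H2 := RInt_sqdist_le beta (3 / 4) 1 (7 / 8) ltac:(simpl; auto) ltac:(lra)).
  unfold second_moment in *. lra.
Qed.

Lemma optimal_distortion_le_1_192 (n : nat) (alpha : list R) :
  (3 <= n)%nat -> optimal_n_means n alpha -> distortion alpha <= 1 / 192.
Proof.
  intros Hn Hopt.
  set (beta := 1 / 8 :: 3 / 8 :: 7 / 8 :: nil).
  eapply Rle_trans.
  { apply (optimal_distortion_le n alpha beta Hopt). split; [discriminate | simpl; lia]. }
  rewrite distortion_eq, (RInt_sqdist_Chasles beta 0 (1 / 4) (1 / 2)).
  assert (H1 := RInt_sqdist_le beta 0 (1 / 4) (1 / 8) ltac:(simpl; auto) ltac:(lra)).
  assert (H2 := RInt_sqdist_le beta (1 / 4) (1 / 2) (3 / 8) ltac:(simpl; auto) ltac:(lra)).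
  assert (H3 := RInt_sqdist_le beta (3 / 4) 1 (7 / 8) ltac:(simpl; auto) ltac:(lra)).
  unfold second_moment in *. lra.
Qed.

Definition replace_pt (r s : R) (l : list R) : list R :=
  map (fun b => if Req_EM_T b r then s else b) l.

Lemma admissible_replace_pt (n : nat) (r s : R) (l : list R) :
  admissible n l -> admissible n (replace_pt r s l).
Proof.
  intros [Hnil Hlen]. split.
  - destruct l; [easy | discriminate].
  - unfold replace_pt. now rewrite length_map.
Qed.

Lemma In_replace_pt_new (r s : R) (l : list R) : In r l -> In s (replace_pt r s l).
Proof.
  intros H. apply (in_map (fun b => if Req_EM_T b r then s else b)) in H.
  now destruct (Req_EM_T r r).
Qed.

Lemma In_replace_pt_old (r s b : R) (l : list R) : In b l -> b <> r -> In b (replace_pt r s l).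
Proof.
  intros H Hbr. apply (in_map (fun b => if Req_EM_T b r then s else b)) in H.
  now destruct (Req_EM_T b r).
Qed.

Lemma sqdist_replace_pt_le (alpha : list R) (r s y : R) : In r alpha ->
  (y - s) ^ 2 <= (y - r) ^ 2 -> sqdist (replace_pt r s alpha) y <= sqdist alpha y.
Proof.
  intros Hr Hsr.
  assert (Hnil : alpha <> nil) by (destruct alpha; [easy | discriminate]).
  destruct (sqdist_attained alpha y Hnil) as [b [Hb ->]].
  destruct (Req_EM_T b r) as [->|Hbr].
  - eapply Rle_trans; [apply sqdist_le, In_replace_pt_new, Hr | exact Hsr].
  - now apply sqdist_le, In_replace_pt_old.
Qed.

(* Moving a point of [alpha] from [q >= 7/8] to [7/8] brings it closer to all of J1, so
   optimality forces the cost on J2 to be at most that of the single point 7/8. *)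
Lemma optimal_J2_cost_le (n : nat) (alpha : list R) (q : R) :
  optimal_n_means n alpha -> In q alpha -> 7 / 8 <= q ->
  RInt (sqdist alpha) (3 / 4) 1 <= 1 / 768.
Proof.
  intros Hopt Hq Hq78.
  set (alpha' := replace_pt q (7 / 8) alpha).
  assert (Hle : distortion alpha <= distortion alpha').
  { apply (optimal_distortion_le n alpha alpha' Hopt), admissible_replace_pt, Hopt. }
  rewrite !distortion_eq in Hle.
  assert (HJ1 : RInt (sqdist alpha') 0 (1 / 2) <= RInt (sqdist alpha) 0 (1 / 2)).
  { apply RInt_sqdist_mono; [lra|]. intros y Hy.
    apply sqdist_replace_pt_le; [exact Hq | nra]. }
  assert (HJ2 := RInt_sqdist_le alpha' (3 / 4) 1 (7 / 8) (In_replace_pt_new _ _ _ Hq) ltac:(lra)).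
  unfold second_moment in HJ2. lra.
Qed.

Lemma voronoi_gap_right (alpha : list R) (a x b : R) :
  voronoi alpha a x -> a <= x -> In b alpha -> b <= a \/ 2 * x - a <= b.
Proof.
  intros Hvor Hax Hb. specialize (Hvor b Hb).
  rewrite (Rabs_pos_eq (x - a)) in Hvor by lra.
  destruct (Rle_or_lt b x).
  - rewrite Rabs_pos_eq in Hvor; lra.
  - rewrite Rabs_left in Hvor; lra.
Qed.

Lemma voronoi_gap_left (alpha : list R) (a x b : R) :
  voronoi alpha a x -> x <= a -> In b alpha -> b <= 2 * x - a \/ a <= b.
Proof.
  intros Hvor Hxa Hb. specialize (Hvor b Hb).
  rewrite (Rabs_left1 (x - a)) in Hvor by lra.
  destruct (Rle_or_lt b x).
  - rewrite Rabs_pos_eq in Hvor; lra.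
  - rewrite Rabs_left in Hvor; lra.
Qed.

Lemma list_le2_points (alpha : list R) : alpha <> nil -> (length alpha <= 2)%nat ->
  exists p q, p <= q /\ forall b, In b alpha <-> b = p \/ b = q.
Proof.
  intros Hnil Hlen.
  destruct alpha as [|a [|b [|c l]]]; [easy | | | simpl in Hlen; lia].
  - exists a, a. split; [lra|]. intros x. simpl. intuition.
  - destruct (Rle_or_lt a b).
    + exists a, b. split; [lra|]. intros x. simpl. intuition.
    + exists b, a. split; [lra|]. intros x. simpl. intuition.
Qed.

Lemma one_mean_cost_gt (c : R) :
  13 / 768 < 3 / 2 * second_moment 0 (1 / 2) c + second_moment (3 / 4) 1 c.
Proof. unfold second_moment. assert (H := pow2_ge_0 (c - 13 / 32)). lra. Qed.

Lemma two_means_cost_gt_split_J1 (p q : R) : p <= q -> 0 <= (p + q) / 2 <= 1 / 2 ->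
  13 / 768 < 3 / 2 * (second_moment 0 ((p + q) / 2) p + second_moment ((p + q) / 2) (1 / 2) q)
             + second_moment (3 / 4) 1 q.
Proof.
  intros Hpq Hm. unfold second_moment.
  set (m := (p + q) / 2) in *. set (d := (q - p) / 2).
  replace p with (m - d) by (unfold m, d; field).
  replace q with (m + d) by (unfold m, d; field).
  assert (Hd : 0 <= d) by (unfold d; lra).
  assert (H0 := pow2_ge_0 (m + d - 13 / 32 - 3 * m ^ 2 / 2)).
  set (s := 1 / 2 - m).
  assert (H1 : 0 <= s * (1 - s)) by (apply Rmult_le_pos; unfold s; lra).
  assert (H2 : 0 <= s ^ 3 * (1 - 3 / 2 * s))
    by (apply Rmult_le_pos; [apply pow_le; unfold s; lra | unfold s; lra]).
  replace m with (1 / 2 - s) in * by (unfold s; ring).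
  lra.
Qed.

Lemma two_means_cost_gt_split_J2 (p q : R) : p <= q -> 3 / 4 <= (p + q) / 2 <= 1 ->
  13 / 768 < 3 / 2 * second_moment 0 (1 / 2) p
             + (second_moment (3 / 4) ((p + q) / 2) p + second_moment ((p + q) / 2) 1 q).
Proof.
  intros Hpq Hm. unfold second_moment.
  set (m := (p + q) / 2) in *. set (d := (q - p) / 2).
  replace p with (m - d) by (unfold m, d; field).
  replace q with (m + d) by (unfold m, d; field).
  assert (Hd : 0 <= d) by (unfold d; lra).
  assert (H0 := pow2_ge_0 (m + d - 13 / 32 - (3 / 16 + m ^ 2))).
  set (s := m - 3 / 4).
  assert (H1 : 0 <= s * (1 / 4 - s)) by (apply Rmult_le_pos; unfold s; lra).
  assert (H2 : 0 <= s ^ 2 * (1 / 4 - s))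
    by (apply Rmult_le_pos; [apply pow_le; unfold s; lra | unfold s; lra]).
  assert (H3 : 0 <= s ^ 3 * (1 / 4 - s))
    by (apply Rmult_le_pos; [apply pow_le; unfold s; lra | unfold s; lra]).
  assert (H4 : 0 <= s) by (unfold s; lra).
  replace m with (3 / 4 + s) in * by (unfold s; ring).
  lra.
Qed.

Lemma sqr_le_of_nearer_left (p q y b : R) : p <= q -> y <= (p + q) / 2 ->
  b = p \/ b = q -> (y - p) ^ 2 <= (y - b) ^ 2.
Proof. intros Hpq Hy [-> | ->]; [lra | nra]. Qed.

Lemma sqr_le_of_nearer_right (p q y b : R) : p <= q -> (p + q) / 2 <= y ->
  b = p \/ b = q -> (y - q) ^ 2 <= (y - b) ^ 2.
Proof. intros Hpq Hy [-> | ->]; [nra | lra]. Qed.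

(* Case analysis on the position of the Voronoi boundary [m] between the two points; only
   [1/2 <= m <= 3/4] can reach the cost 13/768 of {1/4, 7/8}, and then only with equality. *)
Lemma two_means_cost_le (alpha : list R) (p q : R) : p <= q ->
  (forall b, In b alpha <-> b = p \/ b = q) -> distortion alpha <= 13 / 768 ->
  p = 1 / 4 /\ q = 7 / 8.
Proof.
  intros Hpq Hin HV. rewrite distortion_eq in HV.
  assert (Hnil : alpha <> nil) by (intros ->; apply (proj2 (Hin p)); now left).
  assert (HL : forall a b, a <= b -> b <= (p + q) / 2 ->
    second_moment a b p <= RInt (sqdist alpha) a b).
  { intros a b Hab Hb. apply RInt_sqdist_ge; [exact Hnil | exact Hab |].
    intros y d Hy Hd. apply (sqr_le_of_nearer_left p q); [exact Hpq | lra | now apply Hin]. }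
  assert (HR : forall a b, a <= b -> (p + q) / 2 <= a ->
    second_moment a b q <= RInt (sqdist alpha) a b).
  { intros a b Hab Ha. apply RInt_sqdist_ge; [exact Hnil | exact Hab |].
    intros y d Hy Hd. apply (sqr_le_of_nearer_right p q); [exact Hpq | lra | now apply Hin]. }
  assert (Hsplit1 := two_means_cost_gt_split_J1 p q Hpq).
  assert (Hsplit2 := two_means_cost_gt_split_J2 p q Hpq).
  remember ((p + q) / 2) as m eqn:Hm.
  destruct (Rle_or_lt m 0) as [Hm0 | Hm0].
  { assert (H1 := HR 0 (1 / 2) ltac:(lra) ltac:(lra)).
    assert (H2 := HR (3 / 4) 1 ltac:(lra) ltac:(lra)).
    assert (H := one_mean_cost_gt q). lra. }
  destruct (Rle_or_lt m (1 / 2)) as [Hm1 | Hm1].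
  { rewrite (RInt_sqdist_Chasles alpha 0 m (1 / 2)) in HV.
    assert (H1 := HL 0 m ltac:(lra) ltac:(lra)).
    assert (H2 := HR m (1 / 2) ltac:(lra) ltac:(lra)).
    assert (H3 := HR (3 / 4) 1 ltac:(lra) ltac:(lra)).
    specialize (Hsplit1 ltac:(lra)). lra. }
  destruct (Rle_or_lt m (3 / 4)) as [Hm2 | Hm2].
  { assert (H1 := HL 0 (1 / 2) ltac:(lra) ltac:(lra)).
    assert (H2 := HR (3 / 4) 1 ltac:(lra) ltac:(lra)).
    assert (Hsq : 3 / 4 * (p - 1 / 4) ^ 2 + 1 / 4 * (q - 7 / 8) ^ 2 <= 0)
      by (unfold second_moment in *; lra).
    assert (Hp := pow2_ge_0 (p - 1 / 4)). assert (Hq := pow2_ge_0 (q - 7 / 8)).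
    split; apply Rminus_diag_uniq, Rsqr_0_uniq; unfold Rsqr; nra. }
  destruct (Rle_or_lt m 1) as [Hm3 | Hm3].
  { rewrite (RInt_sqdist_Chasles alpha (3 / 4) m 1) in HV.
    assert (H1 := HL 0 (1 / 2) ltac:(lra) ltac:(lra)).
    assert (H2 := HL (3 / 4) m ltac:(lra) ltac:(lra)).
    assert (H3 := HR m 1 ltac:(lra) ltac:(lra)).
    specialize (Hsplit2 ltac:(lra)). lra. }
  assert (H1 := HL 0 (1 / 2) ltac:(lra) ltac:(lra)).
  assert (H2 := HL (3 / 4) 1 ltac:(lra) ltac:(lra)).
  assert (H := one_mean_cost_gt p). lra.
Qed.

Lemma optimal_two_means (alpha : list R) :
  optimal_n_means 2 alpha -> forall b, In b alpha <-> b = 1 / 4 \/ b = 7 / 8.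
Proof.
  intros Hopt.
  assert (HV := optimal_distortion_le_13_768 2 alpha (le_n 2) Hopt).
  destruct Hopt as [[Hnil Hlen] _].
  destruct (list_le2_points alpha Hnil Hlen) as [p [q [Hpq Hin]]].
  destruct (two_means_cost_le alpha p q Hpq Hin HV) as [-> ->].
  exact Hin.
Qed.

Definition separated_means (alpha : list R) : Prop :=
  (exists a, In a alpha /\ J1 a) /\
  (exists a, In a alpha /\ J2 a) /\
  (forall a, In a alpha -> J1 a -> forall x, J2 x -> ~ voronoi alpha a x) /\
  (forall a, In a alpha -> J2 a -> forall x, J1 x -> ~ voronoi alpha a x).

Lemma separated_two_means (alpha : list R) :
  (forall b, In b alpha <-> b = 1 / 4 \/ b = 7 / 8) -> separated_means alpha.
Proof.
  intros Hin.
  assert (I1 : In (1 / 4) alpha) by (apply Hin; now left).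
  assert (I2 : In (7 / 8) alpha) by (apply Hin; now right).
  split; [exists (1 / 4); split; [exact I1 | unfold J1; lra]|].
  split; [exists (7 / 8); split; [exact I2 | unfold J2; lra]|].
  split.
  - intros a Ha [Ha0 Ha1] x [Hx0 Hx1] Hvor.
    destruct (voronoi_gap_right alpha a x (7 / 8) Hvor ltac:(lra) I2).
    + apply Hin in Ha. lra.
    + apply Hin in Ha. destruct Ha; lra.
  - intros a Ha [Ha0 Ha1] x [Hx0 Hx1] Hvor.
    apply Hin in Ha. destruct Ha as [-> | ->]; [lra|].
    destruct (voronoi_gap_left alpha (7 / 8) x (1 / 4) Hvor ltac:(lra) I1); lra.
Qed.

Lemma outside_of_not_meets (alpha : list R) (lo hi : R) :
  ~ (exists a, In a alpha /\ lo <= a <= hi) -> forall b, In b alpha -> b < lo \/ hi < b.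
Proof.
  intros Hno b Hb.
  destruct (Rlt_or_le b lo); [now left|]. destruct (Rlt_or_le hi b); [now right|].
  exfalso. apply Hno. exists b. auto.
Qed.

Section SmallDistortion.

Variables (n : nat) (alpha : list R).
Hypothesis Hopt : optimal_n_means n alpha.
Hypothesis Hsmall : distortion alpha <= 1 / 192.

Lemma small_distortion_meets_J1 : exists a, In a alpha /\ J1 a.
Proof.
  apply NNPP. intros Hno.
  assert (Hout := outside_of_not_meets alpha 0 (1 / 2) Hno).
  assert (Hnil := optimal_nonnil n alpha Hopt).
  rewrite distortion_eq, (RInt_sqdist_Chasles alpha 0 (1 / 4) (1 / 2)) in Hsmall.
  assert (H1 : second_moment 0 (1 / 4) 0 <= RInt (sqdist alpha) 0 (1 / 4)).
  { apply RInt_sqdist_ge; [exact Hnil | lra |]. intros y b Hy Hb. destruct (Hout b Hb); nra. }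
  assert (H2 : second_moment (1 / 4) (1 / 2) (1 / 2) <= RInt (sqdist alpha) (1 / 4) (1 / 2)).
  { apply RInt_sqdist_ge; [exact Hnil | lra |]. intros y b Hy Hb. destruct (Hout b Hb); nra. }
  assert (HJ2 := RInt_sqdist_nonneg alpha (3 / 4) 1 ltac:(lra)).
  unfold second_moment in *. lra.
Qed.

(* Without a point in J2, either some point lies beyond 1, and moving it to 7/8 would pay off
   (optimal_J2_cost_le), or every point lies left of J2 and J2 alone costs more than 1/192. *)
Lemma small_distortion_meets_J2 : exists a, In a alpha /\ J2 a.
Proof.
  apply NNPP. intros Hno.
  assert (Hout := outside_of_not_meets alpha (3 / 4) 1 Hno).
  assert (Hnil := optimal_nonnil n alpha Hopt).
  destruct (classic (exists q, In q alpha /\ 1 < q)) as [[q [Hq Hq1]] | Hnone].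
  - assert (HJ2 : 1 / 768 < RInt (sqdist alpha) (3 / 4) 1).
    { rewrite (RInt_sqdist_Chasles alpha (3 / 4) (7 / 8) 1).
      assert (H1 : second_moment (3 / 4) (7 / 8) (3 / 4) < RInt (sqdist alpha) (3 / 4) (7 / 8)).
      { apply RInt_sqdist_gt; [exact Hnil | lra |]. intros y b Hy Hb. destruct (Hout b Hb); nra. }
      assert (H2 : second_moment (7 / 8) 1 1 < RInt (sqdist alpha) (7 / 8) 1).
      { apply RInt_sqdist_gt; [exact Hnil | lra |]. intros y b Hy Hb. destruct (Hout b Hb); nra. }
      unfold second_moment in *. lra. }
    assert (H := optimal_J2_cost_le n alpha q Hopt Hq ltac:(lra)). lra.
  - assert (HJ2 : second_moment (3 / 4) 1 (3 / 4) < RInt (sqdist alpha) (3 / 4) 1).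
    { apply RInt_sqdist_gt; [exact Hnil | lra |]. intros y b Hy Hb.
      destruct (Hout b Hb) as [Hb1 | Hb1]; [nra|]. exfalso. apply Hnone. now exists b. }
    assert (HJ1 := RInt_sqdist_nonneg alpha 0 (1 / 2) ltac:(lra)).
    rewrite distortion_eq in Hsmall. unfold second_moment in *. lra.
Qed.

(* A point of J1 owning some x in J2 leaves (1/2, 1) empty, so the point of J2 is 1 itself:
   then J2 costs at least 1/192, while optimal_J2_cost_le caps it at 1/768. *)
Lemma small_distortion_J1_voronoi :
  forall a, In a alpha -> J1 a -> forall x, J2 x -> ~ voronoi alpha a x.
Proof.
  intros a Ha [Ha0 Ha1] x [Hx0 Hx1] Hvor.
  assert (Hgap : forall b, In b alpha -> b <= 1 / 2 \/ 1 <= b).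
  { intros b Hb. destruct (voronoi_gap_right alpha a x b Hvor ltac:(lra) Hb); lra. }
  destruct small_distortion_meets_J2 as [b0 [Hb0 [Hb00 Hb01]]].
  assert (Hcap := optimal_J2_cost_le n alpha b0 Hopt Hb0 ltac:(destruct (Hgap b0 Hb0); lra)).
  assert (HJ2 : second_moment (3 / 4) 1 1 <= RInt (sqdist alpha) (3 / 4) 1).
  { apply RInt_sqdist_ge; [exact (optimal_nonnil n alpha Hopt) | lra |].
    intros y b Hy Hb. destruct (Hgap b Hb); nra. }
  unfold second_moment in HJ2. lra.
Qed.

Lemma small_distortion_J2_voronoi :
  forall a, In a alpha -> J2 a -> forall x, J1 x -> ~ voronoi alpha a x.
Proof.
  intros a Ha [Ha0 Ha1] x [Hx0 Hx1] Hvor.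
  assert (Hgap : forall b, In b alpha -> b <= 1 / 4 \/ 3 / 4 <= b).
  { intros b Hb. destruct (voronoi_gap_left alpha a x b Hvor ltac:(lra) Hb); lra. }
  rewrite distortion_eq, (RInt_sqdist_Chasles alpha 0 (1 / 4) (1 / 2)) in Hsmall.
  assert (HJ1 : second_moment (1 / 4) (1 / 2) (1 / 4) <= RInt (sqdist alpha) (1 / 4) (1 / 2)).
  { apply RInt_sqdist_ge; [exact (optimal_nonnil n alpha Hopt) | lra |].
    intros y b Hy Hb. destruct (Hgap b Hb); nra. }
  assert (H0 := RInt_sqdist_nonneg alpha 0 (1 / 4) ltac:(lra)).
  assert (H2 := RInt_sqdist_nonneg alpha (3 / 4) 1 ltac:(lra)).
  unfold second_moment in HJ1. lra.
Qed.

Lemma small_distortion_separated : separated_means alpha.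
Proof.
  split; [exact small_distortion_meets_J1|].
  split; [exact small_distortion_meets_J2|].
  split; [exact small_distortion_J1_voronoi | exact small_distortion_J2_voronoi].
Qed.

End SmallDistortion.

Theorem proposition3p7 :
  forall (n : nat) (alpha : list R),
    (2 <= n)%nat -> optimal_n_means n alpha ->
    (exists a, In a alpha /\ J1 a) /\
    (exists a, In a alpha /\ J2 a) /\
    (forall a, In a alpha -> J1 a -> forall x, J2 x -> ~ voronoi alpha a x) /\
    (forall a, In a alpha -> J2 a -> forall x, J1 x -> ~ voronoi alpha a x).
Proof.
  intros n alpha Hn Hopt.
  destruct (Nat.eq_dec n 2) as [-> | Hn2].
  - exact (separated_two_means alpha (optimal_two_means alpha Hopt)).
  - apply (small_distortion_separated n alpha Hopt).
    apply (optimal_distortion_le_1_192 n alpha ltac:(lia) Hopt).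
Qed.
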